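(* Let $D$ be a CAEXT derivation ending in a configuration $C\neq\mathsf{unsat}$. Then in $C$, for all array terms $a$ and constant array terms $\langle v\rangle$: (i) if $C$ is obtained by applying a non-conflict rule to a configuration $C'$ and $I(a,\langle v\rangle)\neq()$ in $C'$, then both $I(a,\langle v\rangle)$ and its depth $|I(a,\langle v\rangle)|$ are the same in $C$ as in $C'$; (ii) $I(a,\langle v\rangle)$ is well defined (its defining recursion terminates); (iii) $|I(a,\langle v\rangle)|$ is finite; (iv) $I(a,\langle v\rangle)=()$ if and only if $\pi(a,\langle v\rangle)=()$.
   Context: Theory. Many-sorted first-order logic with equality. There is an index sort $\sigma$, an element sort $\tau$, and an array sort $(\sigma\to\tau)$, with function symbols: read $a[i]$, write $a\langle i\triangleleft u\rangle$, and constant array $\langle v\rangle$. The empty theory treats all these symbols (and the array sort) as uninterpreted. $T(A)$ is the set of terms occurring in $A$, $T_{\mathcal A}(A)$ the set of array terms in $A$, and $W(A)=\{a\langle i\triangleleft u\rangle[i]\approx u \mid a\langle i\triangleleft u\rangle\in T(A)\}$. Configurations. A configuration is either $\mathsf{unsat}$ or a triple $\langle A,\mathcal I,\pi\rangle$ where $A$ is a set of formulas (with flat literals), $\mathcal I$ is either $\mathcal I_0=\mathsf{none}$ or an interpretation in the empty theory satisfying $A$, and $\pi$ maps pairs $(a,t)$ ($a$ an array term, $t$ a read term $b[i]$ or a constant array term $\langle v\rangle$) to either the undefined value $()$ or a pair $(r,c)$ with $r$ a formula and $c$ an array term. $\pi_0$ maps every pair to $()$; the initial configuration for $A$ is $\langle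 A,\mathcal I_0,\pi_0\rangle$. Reasons. $\mathcal R(a,t)=()$ if $\pi(a,t)=()$; otherwise $\mathcal R(a,t)=\top$ if $t=a$ or $t=a[i]$ for some $i$; otherwise $\mathcal R(a,t)=\mathcal R(c,t)\wedge r$ where $\pi(a,t)=(r,c)$. Updated indices and depth: $I(a,\langle v\rangle)=()$ and $|I(a,\langle v\rangle)|=0$ if $\pi(a,\langle v\rangle)=()$; $I(a,\langle v\rangle)=\emptyset$ and $|I(a,\langle v\rangle)|=1$ if $a=\langle v\rangle$; $I(a,\langle v\rangle)=I(b,\langle v\rangle)\cup\{j\}$ and $|I(a,\langle v\rangle)|=1+|I(b,\langle v\rangle)|$ if $\pi(a,\langle v\rangle)=(\top,b)$ with $b=a\langle j\triangleleft u\rangle$ or $a=b\langle j\triangleleft u\rangle$ for some $u$; otherwise $I(a,\langle v\rangle)=I(c,\langle v\rangle)$ and $|I(a,\langle v\rangle)|=1+|I(c,\langle v\rangle)|$ where $\pi(a,\langle v\rangle)=(r,c)$. ''$\mathcal I\models\varphi$'' refers to the current $\mathcal I$ (empty theory); such premises require $\mathcal I\ne\mathcal I_0$. ''Reset'' means $(\mathcal I,\pi):=(\mathcal I_0,\pi_0)$. Rules of CAEXT: Interp: if $\mathcal I=\mathcal I_0$ and $\mathcal I'\models A\cup W(A)$ in the empty theory, set $\mathcal I:=\mathcal I'$. Conf: if $A\cup W(A)$ is empty-theory unsatisfiable, derive $\mathsf{unsat}$. InitR: $a[i]\in T(A)$ ⟹ $\pi(a,a[i]):=(\top,a)$. InitW: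 $s=a\langle i\triangleleft u\rangle\in T(A)$ ⟹ $\pi(s,s[i]):=(\top,s)$. RowD: $\mathcal I\models i\not\approx j$, $\pi(a\langle j\triangleleft u\rangle,b[i])\ne()$, $\pi(a,b[i])=()$ ⟹ $\pi(a,b[i]):=(i\not\approx j,a\langle j\triangleleft u\rangle)$. RowU: $\mathcal I\models i\not\approx j$, $a\langle j\triangleleft u\rangle\in T(A)$, $\pi(a,b[i])\ne()$, $\pi(a\langle j\triangleleft u\rangle,b[i])=()$ ⟹ $\pi(a\langle j\triangleleft u\rangle,b[i]):=(i\not\approx j,a)$. EqR: $\mathcal I\models a\approx c$, $a,c\in T_{\mathcal A}(A)$, $a\approx c\in T(A)$, $\pi(a,b[i])\ne()$, $\pi(c,b[i])=()$ ⟹ $\pi(c,b[i]):=(a\approx c,a)$. EqL: symmetric, $\pi(a,b[i]):=(a\approx c,c)$. CongR: $\mathcal I\models i\approx k$, $\pi(a,b[i])\ne()$, $\pi(a,c[k])\ne()$, $\mathcal I\models b[i]\not\approx c[k]$ ⟹ add $\mathcal R(a,b[i])\wedge\mathcal R(a,c[k])\wedge i\approx k\Rightarrow b[i]\approx c[k]$ to $A$, reset. DisEq: $\mathcal I\models a\not\approx c$, $a,c\in T_{\mathcal A}(A)$, $a\approx c\in T(A)$, $k_{\{a,c\}}\notin T(A)$ ⟹ add $a\not\approx c\Rightarrow a[k_{\{a,c\}}]\not\approx c[k_{\{a,c\}}]$ (fresh index constant $k_{\{a,c\}}$), reset. Roc: $\pi(\langle v\rangle,b[i])\ne()$, $\mathcal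 I\models b[i]\not\approx v$ ⟹ add $\mathcal R(\langle v\rangle,b[i])\Rightarrow b[i]\approx v$, reset. InitC: $\langle v\rangle\in T(A)$ ⟹ $\pi(\langle v\rangle,\langle v\rangle):=(\top,\langle v\rangle)$. CowD: $\pi(a\langle j\triangleleft u\rangle,\langle v\rangle)\ne()$, $\pi(a,\langle v\rangle)=()$, $\mathcal I\models\exists i{:}\sigma.\bigwedge_{k\in I(a\langle j\triangleleft u\rangle,\langle v\rangle)\cup\{j\}}i\not\approx k$ ⟹ $\pi(a,\langle v\rangle):=(\top,a\langle j\triangleleft u\rangle)$. CowU: $\pi(a,\langle v\rangle)\ne()$, $\pi(a\langle j\triangleleft u\rangle,\langle v\rangle)=()$, $a\langle j\triangleleft u\rangle\in T(A)$, $\mathcal I\models\exists i{:}\sigma.\bigwedge_{k\in I(a,\langle v\rangle)\cup\{j\}}i\not\approx k$ ⟹ $\pi(a\langle j\triangleleft u\rangle,\langle v\rangle):=(\top,a)$. CEqR: $\mathcal I\models a\approx c$, $a,c\in T_{\mathcal A}(A)$, $a\approx c\in T(A)$, $\pi(a,\langle v\rangle)\ne()$, $\pi(c,\langle v\rangle)=()$ ⟹ $\pi(c,\langle v\rangle):=(a\approx c,a)$. CEqL: symmetric, $\pi(a,\langle v\rangle):=(a\approx c,c)$. CongC: $\pi(a,\langle v\rangle)\ne()$, $\pi(a,\langle w\rangle)\ne()$, $\mathcal I\models v\not\approx w$, $\mathcal I\models\exists i{:}\sigma.\bigwedge_{k\in I(a,\langle v\rangle)\cup I(a,\langle w\rangle)}i\not\approx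 k$ ⟹ add $\mathcal R(a,\langle v\rangle)\wedge\mathcal R(a,\langle w\rangle)\wedge\exists i{:}\sigma.\bigwedge_{k\in I(a,\langle v\rangle)\cup I(a,\langle w\rangle)}i\not\approx k\Rightarrow v\approx w$, reset. Conflict rules: CongR, DisEq, Roc, CongC; all other rules are non-conflict rules. A derivation is a sequence of configurations starting from an initial configuration, each obtained from the previous by a rule application. *)

From Stdlib Require Import List.
Import ListNotations.

Inductive sort := SIdx | SElem | SArr.

Inductive term :=
| TVar   (s : sort) (n : nat)
| TRead  (a i : term)
| TWrite (a i u : term)
| TConst (v : term)
| TK     (a c : term).               (* the fresh index constant k_{a,c} *)

Definition sort_eq_dec (x y : sort) : {x = y} + {x <> y}.
Proof. decide equality. Defined.

Definition term_eq_dec (x y : term) : {x = y} + {x <> y}.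
Proof. decide equality; (apply PeanoNat.Nat.eq_dec || apply sort_eq_dec). Defined.

Fixpoint sort_of (t : term) : option sort :=
  match t with
  | TVar s _ => Some s
  | TRead a i =>
      match sort_of a, sort_of i with
      | Some SArr, Some SIdx => Some SElem | _, _ => None end
  | TWrite a i u =>
      match sort_of a, sort_of i, sort_of u with
      | Some SArr, Some SIdx, Some SElem => Some SArr | _, _, _ => None end
  | TConst v => match sort_of v with Some SElem => Some SArr | _ => None end
  | TK _ _ => Some SIdx
  end.

Definition is_array_term (a : term) : Prop := sort_of a = Some SArr.
Definition is_elem_term (v : term) : Prop := sort_of v = Some SElem.

Inductive subterm (t : term) : term -> Prop :=
| st_refl : subterm t t
| st_read_a a i : subterm t a -> subterm t (TRead a i)
| st_read_i a i : subterm t i -> subterm t (TRead a i)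
| st_write_a a i u : subterm t a -> subterm t (TWrite a i u)
| st_write_i a i u : subterm t i -> subterm t (TWrite a i u)
| st_write_u a i u : subterm t u -> subterm t (TWrite a i u)
| st_const v : subterm t v -> subterm t (TConst v)
| st_k_a a c : subterm t a -> subterm t (TK a c)
| st_k_c a c : subterm t c -> subterm t (TK a c).

Inductive formula :=
| FTop | FBot
| FEq  (t1 t2 : term)
| FNot (f : formula)
| FAnd (f g : formula)
| FOr  (f g : formula)
| FImp (f g : formula)
| FExI (x : nat) (f : formula).     (* exists (TVar SIdx x) : sigma. f *)

Definition bigand (l : list formula) : formula := fold_right FAnd FTop l.

Definition ex_distinct (x : nat) (K : list term) : formula :=
  FExI x (bigand (map (fun k => FNot (FEq (TVar SIdx x) k)) K)).

Definition fresh_for (x : nat) (K : list term) : Prop :=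
  forall k, In k K -> ~ subterm (TVar SIdx x) k.

(* t occurs in f (terms containing a bound variable are not counted) *)
Fixpoint occF (t : term) (f : formula) : Prop :=
  match f with
  | FEq t1 t2 => subterm t t1 \/ subterm t t2
  | FNot g => occF t g
  | FAnd g h | FOr g h | FImp g h => occF t g \/ occF t h
  | FExI x g => occF t g /\ ~ subterm (TVar SIdx x) t
  | _ => False
  end.

Fixpoint atomF (t1 t2 : term) (f : formula) : Prop :=
  match f with
  | FEq s1 s2 => s1 = t1 /\ s2 = t2
  | FNot g => atomF t1 t2 g
  | FAnd g h | FOr g h | FImp g h => atomF t1 t2 g \/ atomF t1 t2 h
  | FExI _ g => atomF t1 t2 g
  | _ => False
  end.

Definition inT (A : list formula) (t : term) : Prop := exists f, In f A /\ occF t f.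
Definition inTA (A : list formula) (t : term) : Prop := inT A t /\ is_array_term t.
Definition atom_inT (A : list formula) (t1 t2 : term) : Prop :=
  exists f, In f A /\ atomF t1 t2 f.

Record interp := {
  iI : Type; iE : Type; iA : Type;
  iread  : iA -> iI -> iE;
  iwrite : iA -> iI -> iE -> iA;
  iconst : iE -> iA;
  ivarI : nat -> iI; ivarE : nat -> iE; ivarA : nat -> iA;
  ik : term -> term -> iI }.

Inductive value (M : interp) :=
| VI (x : iI M) | VE (x : iE M) | VA (x : iA M).
Arguments VI {M}. Arguments VE {M}. Arguments VA {M}.

Fixpoint eval (M : interp) (rho : nat -> iI M) (t : term) : option (value M) :=
  match t with
  | TVar SIdx n => Some (VI (rho n))
  | TVar SElem n => Some (VE (ivarE M n))
  | TVar SArr n => Some (VA (ivarA M n))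
  | TRead a i =>
      match eval M rho a, eval M rho i with
      | Some (VA x), Some (VI y) => Some (VE (iread M x y)) | _, _ => None end
  | TWrite a i u =>
      match eval M rho a, eval M rho i, eval M rho u with
      | Some (VA x), Some (VI y), Some (VE z) => Some (VA (iwrite M x y z))
      | _, _, _ => None end
  | TConst v =>
      match eval M rho v with Some (VE z) => Some (VA (iconst M z)) | _ => None end
  | TK a c => Some (VI (ik M a c))
  end.

Definition upd_env {X : Type} (rho : nat -> X) (x : nat) (d : X) : nat -> X :=
  fun n => if PeanoNat.Nat.eqb n x then d else rho n.

Fixpoint sat (M : interp) (rho : nat -> iI M) (f : formula) : Prop :=
  match f with
  | FTop => True
  | FBot => False
  | FEq t1 t2 => exists w, eval M rho t1 = Some w /\ eval M rho t2 = Some w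
  | FNot g => ~ sat M rho g
  | FAnd g h => sat M rho g /\ sat M rho h
  | FOr g h => sat M rho g \/ sat M rho h
  | FImp g h => sat M rho g -> sat M rho h
  | FExI x g => exists d : iI M, sat M (upd_env rho x d) g
  end.

(* M |= phi  (closed reading: index constants interpreted by ivarI) *)
Definition msat (M : interp) (f : formula) : Prop := sat M (ivarI M) f.

Definition models_AW (M : interp) (A : list formula) : Prop :=
  (forall f, In f A -> msat M f) /\
  (forall a i u, inT A (TWrite a i u) ->
     msat M (FEq (TRead (TWrite a i u) i) u)).

Definition pimap := term -> term -> option (formula * term).
Definition pi0 : pimap := fun _ _ => None.

Definition upd (pi : pimap) (a t : term) (r : formula * term) : pimap :=
  fun a' t' => if term_eq_dec a' a then if term_eq_dec t' t then Some r
               else pi a' t' else pi a' t'.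

Inductive config :=
| Unsat
| Conf (A : list formula) (I : option interp) (pi : pimap).

Definition init (A : list formula) : config := Conf A None pi0.

(* Reasons R(a,t), as the relation "R(a,t) evaluates to X" *)
Inductive Rrel (pi : pimap) : term -> term -> option formula -> Prop :=
| R_undef a t : pi a t = None -> Rrel pi a t None
| R_top a t : pi a t <> None -> (t = a \/ exists i, t = TRead a i) ->
    Rrel pi a t (Some FTop)
| R_step a t r c rc : pi a t = Some (r, c) -> t <> a ->
    (forall i, t <> TRead a i) -> Rrel pi c t (Some rc) ->
    Rrel pi a t (Some (FAnd rc r)).

(* Updated indices I(a,<v>) and depth |I(a,<v>)|, as the relation
   "the recursion for (a,<v>) terminates with value X and depth n";
   X = None encodes (), Some S encodes the set of elements of S. *)
Definition write_link (a b j : term) : Prop :=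
  exists u, b = TWrite a j u \/ a = TWrite b j u.

Inductive Irel (pi : pimap) (v : term) : term -> option (list term) -> nat -> Prop :=
| I_undef a : pi a (TConst v) = None -> Irel pi v a None 0
| I_self a : pi a (TConst v) <> None -> a = TConst v -> Irel pi v a (Some nil) 1
| I_write a b j L n : pi a (TConst v) = Some (FTop, b) -> a <> TConst v ->
    write_link a b j -> Irel pi v b (Some L) n ->
    Irel pi v a (Some (j :: L)) (Datatypes.S n)
| I_other a r c X n : pi a (TConst v) = Some (r, c) -> a <> TConst v ->
    ~ (r = FTop /\ exists j, write_link a c j) -> Irel pi v c X n ->
    Irel pi v a X (Datatypes.S n).

Inductive step_nc : config -> config -> Prop :=
| r_Interp A pi M : models_AW M A -> step_nc (Conf A None pi) (Conf A (Some M) pi)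
| r_Conf A I pi : ~ (exists M, models_AW M A) -> step_nc (Conf A I pi) Unsat
| r_InitR A I pi a i : inT A (TRead a i) ->
    step_nc (Conf A I pi) (Conf A I (upd pi a (TRead a i) (FTop, a)))
| r_InitW A I pi a i u : inT A (TWrite a i u) ->
    step_nc (Conf A I pi)
      (Conf A I (upd pi (TWrite a i u) (TRead (TWrite a i u) i) (FTop, TWrite a i u)))
| r_RowD A M pi a j u b i :
    msat M (FNot (FEq i j)) ->
    pi (TWrite a j u) (TRead b i) <> None -> pi a (TRead b i) = None ->
    step_nc (Conf A (Some M) pi)
      (Conf A (Some M) (upd pi a (TRead b i) (FNot (FEq i j), TWrite a j u)))
| r_RowU A M pi a j u b i :
    msat M (FNot (FEq i j)) -> inT A (TWrite a j u) ->
    pi a (TRead b i) <> None -> pi (TWrite a j u) (TRead b i) = None ->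
    step_nc (Conf A (Some M) pi)
      (Conf A (Some M) (upd pi (TWrite a j u) (TRead b i) (FNot (FEq i j), a)))
| r_EqR A M pi a c b i :
    msat M (FEq a c) -> inTA A a -> inTA A c -> atom_inT A a c ->
    pi a (TRead b i) <> None -> pi c (TRead b i) = None ->
    step_nc (Conf A (Some M) pi)
      (Conf A (Some M) (upd pi c (TRead b i) (FEq a c, a)))
| r_EqL A M pi a c b i :
    msat M (FEq a c) -> inTA A a -> inTA A c -> atom_inT A a c ->
    pi c (TRead b i) <> None -> pi a (TRead b i) = None ->
    step_nc (Conf A (Some M) pi)
      (Conf A (Some M) (upd pi a (TRead b i) (FEq a c, c)))
| r_InitC A I pi v : inT A (TConst v) ->
    step_nc (Conf A I pi) (Conf A I (upd pi (TConst v) (TConst v) (FTop, TConst v)))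
| r_CowD A M pi a j u v S n x :
    pi (TWrite a j u) (TConst v) <> None -> pi a (TConst v) = None ->
    Irel pi v (TWrite a j u) (Some S) n ->
    fresh_for x (S ++ [j]) -> msat M (ex_distinct x (S ++ [j])) ->
    step_nc (Conf A (Some M) pi)
      (Conf A (Some M) (upd pi a (TConst v) (FTop, TWrite a j u)))
| r_CowU A M pi a j u v S n x :
    pi a (TConst v) <> None -> pi (TWrite a j u) (TConst v) = None ->
    inT A (TWrite a j u) ->
    Irel pi v a (Some S) n ->
    fresh_for x (S ++ [j]) -> msat M (ex_distinct x (S ++ [j])) ->
    step_nc (Conf A (Some M) pi)
      (Conf A (Some M) (upd pi (TWrite a j u) (TConst v) (FTop, a)))
| r_CEqR A M pi a c v :
    msat M (FEq a c) -> inTA A a -> inTA A c -> atom_inT A a c ->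
    pi a (TConst v) <> None -> pi c (TConst v) = None ->
    step_nc (Conf A (Some M) pi)
      (Conf A (Some M) (upd pi c (TConst v) (FEq a c, a)))
| r_CEqL A M pi a c v :
    msat M (FEq a c) -> inTA A a -> inTA A c -> atom_inT A a c ->
    pi c (TConst v) <> None -> pi a (TConst v) = None ->
    step_nc (Conf A (Some M) pi)
      (Conf A (Some M) (upd pi a (TConst v) (FEq a c, c))).

Inductive step_c : config -> config -> Prop :=
| r_CongR A M pi a b i c k r1 r2 :
    msat M (FEq i k) ->
    pi a (TRead b i) <> None -> pi a (TRead c k) <> None ->
    msat M (FNot (FEq (TRead b i) (TRead c k))) ->
    Rrel pi a (TRead b i) (Some r1) -> Rrel pi a (TRead c k) (Some r2) ->
    step_c (Conf A (Some M) pi)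
      (Conf (FImp (FAnd (FAnd r1 r2) (FEq i k)) (FEq (TRead b i) (TRead c k)) :: A)
            None pi0)
| r_DisEq A M pi a c :
    msat M (FNot (FEq a c)) -> inTA A a -> inTA A c -> atom_inT A a c ->
    ~ inT A (TK a c) -> ~ inT A (TK c a) ->
    step_c (Conf A (Some M) pi)
      (Conf (FImp (FNot (FEq a c))
                  (FNot (FEq (TRead a (TK a c)) (TRead c (TK a c)))) :: A)
            None pi0)
| r_Roc A M pi v b i r :
    pi (TConst v) (TRead b i) <> None ->
    msat M (FNot (FEq (TRead b i) v)) ->
    Rrel pi (TConst v) (TRead b i) (Some r) ->
    step_c (Conf A (Some M) pi)
      (Conf (FImp r (FEq (TRead b i) v) :: A) None pi0)
| r_CongC A M pi a v w r1 r2 S1 n1 S2 n2 x :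
    pi a (TConst v) <> None -> pi a (TConst w) <> None ->
    msat M (FNot (FEq v w)) ->
    Irel pi v a (Some S1) n1 -> Irel pi w a (Some S2) n2 ->
    fresh_for x (S1 ++ S2) -> msat M (ex_distinct x (S1 ++ S2)) ->
    Rrel pi a (TConst v) (Some r1) -> Rrel pi a (TConst w) (Some r2) ->
    step_c (Conf A (Some M) pi)
      (Conf (FImp (FAnd (FAnd r1 r2) (ex_distinct x (S1 ++ S2))) (FEq v w) :: A)
            None pi0).

Definition step (C C' : config) : Prop := step_nc C C' \/ step_c C C'.

Inductive deriv (A0 : list formula) : config -> Prop :=
| d_init : deriv A0 (init A0)
| d_step C C' : deriv A0 C -> step C C' -> deriv A0 C'.

(* Call an entry pi(a, <w>) *total* when the recursion defining I(a, <w>) terminates.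
   Non-conflict rules only add entries pi(x, <w>) := (r, c) whose target c is
   already a total entry (or x = <w> itself), and never change an existing
   entry other than the self entries pi(<w>, <w>), whose content the recursion
   ignores; conflict rules reset pi to pi0.  Hence every defined entry of a
   reachable configuration is total, and every terminating recursion survives
   a non-conflict step unchanged.  Uniqueness of I and its depth follows because
   the updated index j of a link between a and a<j <| u> is determined by the
   two array terms. *)
From Stdlib Require Import List Lia Classical.

Fixpoint term_size (t : term) : nat :=
  match t with
  | TVar _ _ => 1
  | TRead a i => 1 + term_size a + term_size i
  | TWrite a i u => 1 + term_size a + term_size i + term_size u
  | TConst v => 1 + term_size v
  | TK a c => 1 + term_size a + term_size c
  end.

Lemma write_link_index_unique a b j j' :
  write_link a b j -> write_link a b j' -> j = j'.
Proof.
  intros [u [H|H]] [u' [H'|H']]; subst.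
  - now injection H'.
  - apply (f_equal term_size) in H'; simpl in H'; lia.
  - apply (f_equal term_size) in H'; simpl in H'; lia.
  - now injection H'.
Qed.

Lemma Irel_functional p v a X n X' n' :
  Irel p v a X n -> Irel p v a X' n' -> X = X' /\ n = n'.
Proof.
  intros H; revert X' n'.
  induction H as [a Hu|a Hd Ha|a b j L n Hp Ha Hw HI IH|a r c X n Hp Ha Hn HI IH];
    intros X' n' H'; inversion H'; subst; try congruence; try easy.
  all: match goal with
       | h1 : ?p ?a ?t = Some _, h2 : ?p ?a ?t = Some _ |- _ =>
           rewrite h1 in h2; injection h2; intros; subst
       end.
  - match goal with h : write_link _ _ ?j' |- _ =>
      pose proof (write_link_index_unique _ _ _ _ Hw h) end; subst.
    match goal with h : Irel _ _ _ (Some _) _ |- _ =>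
      destruct (IH _ _ h) as [EL En]; injection EL end.
    intros; subst; auto.
  - exfalso; eauto.
  - exfalso; eauto.
  - match goal with h : Irel _ _ _ _ _ |- _ => destruct (IH _ _ h) end.
    subst; auto.
Qed.

(* The self entries pi(<w>, <w>) may be overwritten: InitC resets them. *)
Definition const_extends (p q : pimap) : Prop :=
  forall w a, p a (TConst w) <> None ->
    q a (TConst w) <> None /\ (a <> TConst w -> q a (TConst w) = p a (TConst w)).

Definition Irel_total (p : pimap) : Prop :=
  forall w a, p a (TConst w) <> None -> exists L n, Irel p w a (Some L) n.

Lemma const_extends_refl p : const_extends p p.
Proof. now intros w a H. Qed.

Lemma Irel_const_extends p q v a X n :
  const_extends p q -> Irel p v a X n -> X <> None -> Irel q v a X n.
Proof.
  intros E.
  induction 1 as [a Hu|a Hd Ha|a b j L n Hp Ha Hw HI IH|a r c X n Hp Ha Hn HI IH];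
    intros HX.
  - congruence.
  - apply I_self; auto. apply (E v a Hd).
  - destruct (E v a) as [_ Eq]; [congruence|].
    eapply I_write; eauto. rewrite Eq; auto. apply IH; discriminate.
  - destruct (E v a) as [_ Eq]; [congruence|].
    eapply I_other; eauto. rewrite Eq; auto.
Qed.

Lemma Irel_total_exists p v a : Irel_total p -> exists X n, Irel p v a X n.
Proof.
  intros Ht. destruct (p a (TConst v)) eqn:Ep.
  - destruct (Ht v a) as [L [n HL]]; [congruence|eauto].
  - exists None, 0. now apply I_undef.
Qed.

Lemma Irel_None_iff p v a X n :
  Irel_total p -> Irel p v a X n -> (X = None <-> p a (TConst v) = None).
Proof.
  intros Ht H; split.
  - intros ->. destruct (p a (TConst v)) eqn:Ep; auto.
    destruct (Ht v a) as [L [m HL]]; [congruence|].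
    now destruct (Irel_functional _ _ _ _ _ _ _ H HL).
  - intros Hu. inversion H; subst; congruence.
Qed.

Section Update.

Variables (p : pimap) (x t : term) (r : formula) (c : term).

(* The shape of every update pi(x, t) := (r, c) made by a non-conflict rule. *)
Definition safe_update : Prop :=
  forall w, t = TConst w -> x <> t -> p x t = None /\ p c t <> None.

Hypothesis Hsafe : safe_update.

Lemma upd_at : upd p x t (r, c) x t = Some (r, c).
Proof.
  unfold upd. destruct (term_eq_dec x x); [|congruence].
  now destruct (term_eq_dec t t).
Qed.

Lemma upd_off a t' : (a, t') <> (x, t) -> upd p x t (r, c) a t' = p a t'.
Proof.
  intros Hne. unfold upd.
  destruct (term_eq_dec a x); destruct (term_eq_dec t' t); congruence.
Qed.

Lemma safe_update_const_extends : const_extends p (upd p x t (r, c)).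
Proof.
  intros w a Ha.
  destruct (classic ((a, TConst w) = (x, t))) as [Eq|Hne].
  - injection Eq; intros Ht Hx; subst a.
    rewrite Ht in Ha |- *. rewrite upd_at. split; [discriminate|].
    intros Hne. now destruct (Hsafe w (eq_sym Ht) Hne).
  - now rewrite upd_off.
Qed.

Lemma safe_update_Irel_total : Irel_total p -> Irel_total (upd p x t (r, c)).
Proof.
  intros Ht w a Ha.
  pose proof safe_update_const_extends as E.
  destruct (classic ((a, TConst w) = (x, t))) as [Eq|Hne].
  - injection Eq; intros Hw Hx; subst a.
    destruct (term_eq_dec x (TConst w)) as [Hs|Hs].
    + exists nil, 1. now apply I_self.
    + destruct (Ht w c) as [L [n HL]].
      { rewrite Hw. apply (Hsafe w (eq_sym Hw)). now rewrite <- Hw. }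
      apply (Irel_const_extends _ _ _ _ _ _ E) in HL; [|discriminate].
      destruct (classic (r = FTop /\ exists j, write_link x c j))
        as [[Hr [j Hj]]|Hno].
      * exists (j :: L), (S n). eapply I_write; eauto. now rewrite Hw, upd_at, Hr.
      * exists L, (S n). eapply I_other; eauto. rewrite Hw. apply upd_at.
  - rewrite upd_off in Ha by exact Hne.
    destruct (Ht w a Ha) as [L [n HL]]. exists L, n.
    eapply Irel_const_extends; eauto. discriminate.
Qed.

End Update.

Lemma step_nc_pimap A M p A' M' q :
  step_nc (Conf A M p) (Conf A' M' q) ->
  q = p \/ exists x t r c, q = upd p x t (r, c) /\ safe_update p x t c.
Proof.
  intros Hs; inversion Hs; subst; [now left|..]; right; do 4 eexists;
    split; try reflexivity; intros w' Hw Hx;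
    try discriminate Hw; try congruence; injection Hw; intros; subst; auto.
Qed.

Lemma step_nc_const_extends A M p A' M' q :
  step_nc (Conf A M p) (Conf A' M' q) -> const_extends p q.
Proof.
  intros Hs. destruct (step_nc_pimap _ _ _ _ _ _ Hs) as [->|[x [t [r [c [-> Hu]]]]]].
  - apply const_extends_refl.
  - now apply safe_update_const_extends.
Qed.

Lemma step_nc_Irel_total A M p A' M' q :
  step_nc (Conf A M p) (Conf A' M' q) -> Irel_total p -> Irel_total q.
Proof.
  intros Hs. destruct (step_nc_pimap _ _ _ _ _ _ Hs) as [->|[x [t [r [c [-> Hu]]]]]].
  - auto.
  - now apply safe_update_Irel_total.
Qed.

Lemma step_c_resets C A M p : step_c C (Conf A M p) -> p = pi0.
Proof. intros Hs; now inversion Hs. Qed.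

Lemma Irel_total_pi0 : Irel_total pi0.
Proof. intros w a H; now contradiction H. Qed.

Lemma deriv_Irel_total A0 A M p : deriv A0 (Conf A M p) -> Irel_total p.
Proof.
  remember (Conf A M p) as C eqn:EC; intros HD; revert A M p EC.
  induction HD as [|C C' HD IH [Hs|Hs]]; intros A M p EC; subst.
  - injection EC; intros; subst; apply Irel_total_pi0.
  - destruct C as [|A1 M1 p1]; [inversion Hs|].
    eapply step_nc_Irel_total; eauto.
  - rewrite (step_c_resets _ _ _ _ Hs). apply Irel_total_pi0.
Qed.

Theorem mainTheorem5 :
  forall (A0 A : list formula) (M : option interp) (pi : pimap),
    deriv A0 (Conf A M pi) ->
    (* (ii)+(iii)+(iv) *)
    (forall a v, is_array_term a -> is_elem_term v ->
       (exists X n, Irel pi v a X n /\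
          forall X' n', Irel pi v a X' n' -> X' = X /\ n' = n) /\
       (forall X n, Irel pi v a X n -> (X = None <-> pi a (TConst v) = None))) /\
    (* (i) *)
    (forall A' M' pi', deriv A0 (Conf A' M' pi') ->
       step_nc (Conf A' M' pi') (Conf A M pi) ->
       forall a v S n, is_array_term a -> is_elem_term v ->
         Irel pi' v a (Some S) n -> Irel pi v a (Some S) n).
Proof.
  intros A0 A M pi HD.
  pose proof (deriv_Irel_total _ _ _ _ HD) as Ht.
  split.
  - intros a v _ _. split.
    + destruct (Irel_total_exists pi v a Ht) as [X [n H]].
      exists X, n. split; auto.
      intros X' n' H'. now destruct (Irel_functional _ _ _ _ _ _ _ H' H).
    + intros X n H. now apply (Irel_None_iff _ _ _ _ n).
  - intros A' M' pi' _ Hs a v S n _ _ H.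
    eapply Irel_const_extends; [|exact H|discriminate].
    exact (step_nc_const_extends _ _ _ _ _ _ Hs).
Qed.
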